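(* Suppose the model has a single-strain ($I_1$)-infection equilibrium $E_1=(\bar S,\bar V_1,\bar I_1,0)$ and a single-strain ($I_2$)-infection equilibrium $E_2=(\tilde S,\tilde V_1,0,\tilde I_2)$, each with positive listed components. Define $\bar{\mathcal{R}}_2=\frac{1}{\alpha_2}\frac{\partial F_2}{\partial I_2}(\bar S,0)+\frac{k\bar V_1}{\alpha_2}$ and $\tilde{\mathcal{R}}_1=\frac{1}{\alpha_1}\frac{\partial F_1}{\partial I_1}(\tilde S,0)$. If $\bar{\mathcal{R}}_2>1$ and $\tilde{\mathcal{R}}_1>1$, then the model admits an endemic equilibrium $E_3=(S^*,V_1^*,I_1^*,I_2^* )$ with all components positive.
   Context: The model is $\dot S=\Lambda-F_1(S,I_1)-F_2(S,I_2)-\lambda S$, $\dot V_1=rS-(\mu+kI_2)V_1$, $\dot I_1=F_1(S,I_1)-\alpha_1I_1$, $\dot I_2=F_2(S,I_2)+kI_2V_1-\alpha_2I_2$ on $\mathbb{R}^4_+$. The constants $\Lambda,\mu,r,k,\gamma_1,\gamma_2>0$ and $v_1,v_2\ge0$; $\lambda=r+\mu$ and $\alpha_i=\gamma_i+v_i+\mu$. For $i=1,2$ the incidence functions satisfy: - (H1) $F_i(S,I_i)=I_if_i(S,I_i)$ with $F_i,f_i\in C^2(\mathbb{R}^2_+,\mathbb{R}_+)$ and $F_i(0,I_i)=F_i(S,0)=0$; - (H2) $\partial f_i/\partial S>0$ and $\partial f_i/\partial I_i\le0$; - (H3) $\lim_{I_i\to0^+}F_i(S,I_i)/I_i$ exists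 and is positive for $S>0$. *)

From Stdlib Require Import Reals.
From Coquelicot Require Import Coquelicot.
Open Scope R_scope.

Definition dS (g : R -> R -> R) (S I : R) : R := Derive (fun s => g s I) S.
Definition dI (g : R -> R -> R) (S I : R) : R := Derive (fun i => g S i) I.

Definition C1_2d (g : R -> R -> R) : Prop :=
  (forall S I, ex_derive (fun s => g s I) S /\ ex_derive (fun i => g S i) I) /\
  (forall S I, continuity_2d_pt g S I) /\
  (forall S I, continuity_2d_pt (dS g) S I) /\
  (forall S I, continuity_2d_pt (dI g) S I).

Definition C2_2d (g : R -> R -> R) : Prop :=
  C1_2d g /\ C1_2d (dS g) /\ C1_2d (dI g).

Definition incidence_hyps (F f : R -> R -> R) : Prop :=
  C2_2d F /\ C2_2d f /\
  (forall S I, 0 <= S -> 0 <= I -> 0 <= F S I /\ 0 <= f S I) /\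
  (forall S I, 0 <= S -> 0 <= I -> F S I = I * f S I) /\
  (forall I, 0 <= I -> F 0 I = 0) /\
  (forall S, 0 <= S -> F S 0 = 0) /\
  (forall S I, 0 <= S -> 0 <= I -> dS f S I > 0 /\ dI f S I <= 0) /\
  (forall S, 0 < S -> exists l, 0 < l /\
      filterlim (fun I => F S I / I) (at_right 0) (locally l)).

(* Right-hand side of the model; lambda = r + mu, alpha_i = gamma_i + v_i + mu. *)
Definition rhs_S (Lam mu r : R) (F1 F2 : R -> R -> R) (S V1 I1 I2 : R) : R :=
  Lam - F1 S I1 - F2 S I2 - (r + mu) * S.
Definition rhs_V1 (mu r k : R) (S V1 I1 I2 : R) : R :=
  r * S - (mu + k * I2) * V1.
Definition rhs_I1 (alpha1 : R) (F1 : R -> R -> R) (S V1 I1 I2 : R) : R :=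
  F1 S I1 - alpha1 * I1.
Definition rhs_I2 (alpha2 k : R) (F2 : R -> R -> R) (S V1 I1 I2 : R) : R :=
  F2 S I2 + k * I2 * V1 - alpha2 * I2.

Definition is_equilibrium (Lam mu r k gamma1 gamma2 v1 v2 : R)
    (F1 F2 : R -> R -> R) (S V1 I1 I2 : R) : Prop :=
  0 <= S /\ 0 <= V1 /\ 0 <= I1 /\ 0 <= I2 /\
  rhs_S Lam mu r F1 F2 S V1 I1 I2 = 0 /\
  rhs_V1 mu r k S V1 I1 I2 = 0 /\
  rhs_I1 (gamma1 + v1 + mu) F1 S V1 I1 I2 = 0 /\
  rhs_I2 (gamma2 + v2 + mu) k F2 S V1 I1 I2 = 0.

From Stdlib Require Import Reals Lra IndefiniteDescription.
From Coquelicot Require Import Coquelicot.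
Open Scope R_scope.

(* Put V1 on its nullcline V1 = r S / (mu + k I2).  For I2 in [0, I2~] the I2-equation
   f2(S, I2) + k V1 = alpha2 has a unique root S = sigma(I2) in (0, S~], since its left-hand side
   is strictly increasing in S, and sigma depends continuously on I2.  The S-equation then fixes
   I1, and an endemic equilibrium is a zero of I2 |-> f1(sigma, I1) - alpha1.  At I2 = 0,
   R2^ > 1 puts sigma(0) to the left of S^, so I1 exceeds I1^ and (H2) gives f1 < alpha1; at
   I2 = I2~ the point is E2 and R1~ > 1 gives f1(S~, 0) > alpha1.  The intermediate value theorem
   yields a zero, where I1 > 0 because the outflow (alpha2 - k V1) I2 + lambda S stays strictly
   below its value at E2. *)

Lemma continuous_Rplus (f g : R -> R) x :
  continuous f x -> continuous g x -> continuous (fun t => f t + g t) x.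
Proof. exact (continuous_plus f g x). Qed.

Lemma continuous_Rmult (f g : R -> R) x :
  continuous f x -> continuous g x -> continuous (fun t => f t * g t) x.
Proof. exact (continuous_mult f g x). Qed.

Lemma continuous_Rminus (f g : R -> R) x :
  continuous f x -> continuous g x -> continuous (fun t => f t - g t) x.
Proof.
  intros Hf Hg. apply continuous_Rplus; [exact Hf|exact (continuous_opp g x Hg)].
Qed.

Lemma continuous_comp_2d (h : R -> R -> R) (u v : R -> R) t :
  continuity_2d_pt h (u t) (v t) -> continuous u t -> continuous v t ->
  continuous (fun x => h (u x) (v x)) t.
Proof.
  intros Hh Hu Hv. apply continuous_comp_2; [exact Hu|exact Hv|].
  exact (proj1 (continuity_2d_pt_filterlim h (u t) (v t)) Hh).
Qed.

Lemma continuous_locally_lt (h : R -> R) x c :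
  continuous h x -> h x < c -> locally x (fun t => h t < c).
Proof. intros Hh Hlt. exact (Hh (fun u => u < c) (open_lt c (h x) Hlt)). Qed.

Lemma continuous_locally_gt (h : R -> R) x c :
  continuous h x -> c < h x -> locally x (fun t => c < h t).
Proof. intros Hh Hlt. exact (Hh (fun u => c < u) (open_gt c (h x) Hlt)). Qed.

Lemma continuous_right_limit_unique (h : R -> R) x l :
  continuous h x -> filterlim h (at_right x) (locally l) -> h x = l.
Proof.
  intros Hh Hl.
  apply (filterlim_locally_unique (F := at_right x) h); [|exact Hl].
  exact (filterlim_filter_le_1 h (filter_le_within (F := locally x) _) Hh).
Qed.

Definition clamp (a b t : R) : R := Rmax a (Rmin b t).

Lemma clamp_bounds a b t : a <= b -> a <= clamp a b t <= b.
Proof. unfold clamp, Rmax, Rmin. repeat destruct Rle_dec; lra. Qed.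

Lemma clamp_id a b t : a <= t <= b -> clamp a b t = t.
Proof. unfold clamp, Rmax, Rmin. repeat destruct Rle_dec; lra. Qed.

Lemma continuous_clamp a b t : continuous (clamp a b) t.
Proof.
  intros P [eps HP]. exists eps. intros y Hy. apply HP.
  change (Rabs (y - t) < eps) in Hy. change (Rabs (clamp a b y - clamp a b t) < eps).
  unfold clamp, Rmax, Rmin in *. repeat destruct Rle_dec; unfold Rabs in *;
    repeat destruct Rcase_abs; lra.
Qed.

Lemma lt_of_div_gt_1 a x : 0 < a -> x / a > 1 -> a < x.
Proof.
  intros Ha Hx. replace x with (x / a * a) by (field; lra).
  rewrite <- (Rmult_1_l a) at 1. apply Rmult_lt_compat_r; lra.
Qed.

Lemma strict_incr_reflect (h : R -> R) x y :
  (forall u v, 0 <= u -> u < v -> h u < h v) -> 0 <= x -> 0 <= y ->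
  h x < h y -> x < y.
Proof.
  intros Hh Hx Hy Hlt. destruct (Rlt_or_le x y) as [|[Hyx|Hyx]]; [assumption| |].
  - pose proof (Hh y x Hy Hyx). lra.
  - subst. lra.
Qed.

Lemma nonincr_of_derive_nonpos (h dh : R -> R) :
  (forall x, 0 <= x -> is_derive h x (dh x)) -> (forall x, 0 <= x -> dh x <= 0) ->
  forall x y, 0 <= x -> x <= y -> h y <= h x.
Proof.
  intros Hd Hneg x y Hx [Hxy|<-]; [|lra].
  destruct (MVT_gen h x y dh) as [c [Hc Hmvt]];
    rewrite ?Rmin_left, ?Rmax_right in * by lra.
  - intros u Hu. apply Hd. lra.
  - intros u Hu. apply continuity_pt_filterlim, (ex_derive_continuous h).
    eexists. apply Hd. lra.
  - pose proof (Hneg c ltac:(lra)).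
    assert (dh c * (y - x) <= 0) by (apply Rmult_le_0_r; lra). lra.
Qed.

(* Near [t0], [g (s t0 - e) t < 0 < g (s t0 + e) t], which traps [s t] within [e] of [s t0]. *)
Lemma continuous_increasing_root (g : R -> R -> R) (s : R -> R) t0 :
  (forall t x y, 0 <= x -> x < y -> g x t < g y t) ->
  (forall x, 0 < x -> continuous (g x) t0) ->
  (forall t, 0 < s t /\ g (s t) t = 0) ->
  continuous s t0.
Proof.
  intros Hmono Hcont Hroot.
  apply filterlim_locally. intros eps.
  destruct (Hroot t0) as [Hs0 Hg0].
  set (e := Rmin eps (s t0 / 2)).
  assert (He : 0 < e) by (apply Rmin_pos; [apply cond_pos|lra]).
  assert (He_eps : e <= eps) by apply Rmin_l.
  assert (He_s : e <= s t0 / 2) by apply Rmin_r.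
  assert (Hlo : locally t0 (fun t => g (s t0 - e) t < 0)).
  { apply continuous_locally_lt; [apply Hcont; lra|].
    rewrite <- Hg0. apply Hmono; lra. }
  assert (Hhi : locally t0 (fun t => 0 < g (s t0 + e) t)).
  { apply continuous_locally_gt; [apply Hcont; lra|].
    rewrite <- Hg0. apply Hmono; lra. }
  generalize (filter_and _ _ Hlo Hhi). apply filter_imp. intros t [Hl Hh].
  destruct (Hroot t) as [Hst Hgt].
  assert (s t0 - e < s t).
  { apply (strict_incr_reflect (fun x => g x t)); [intros; apply Hmono; lra|lra|lra|lra]. }
  assert (s t < s t0 + e).
  { apply (strict_incr_reflect (fun x => g x t)); [intros; apply Hmono; lra|lra|lra|lra]. }
  change (Rabs (s t - s t0) < eps). unfold Rabs. destruct Rcase_abs; lra.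
Qed.

Lemma is_derive_id_mul_at_0 (F g : R -> R) D :
  is_derive F 0 D -> continuous g 0 -> (forall h, 0 <= h -> F h = h * g h) -> D = g 0.
Proof.
  intros HD Hg Hfac. symmetry. apply (continuous_right_limit_unique g 0 D Hg).
  apply filterlim_locally. intros eps.
  apply is_derive_Reals in HD. destruct (HD eps (cond_pos eps)) as [delta Hdelta].
  exists delta. intros h Hh Hpos.
  change (Rabs (h - 0) < delta) in Hh. change (Rabs (g h - D) < eps).
  rewrite Rminus_0_r in Hh. specialize (Hdelta h ltac:(lra) Hh).
  rewrite Rplus_0_l, (Hfac h), (Hfac 0) in Hdelta by lra.
  replace ((h * g h - 0 * g 0) / h) with (g h) in Hdelta by (field; lra).
  exact Hdelta.
Qed.

Section IncidenceFunction.

Variables F f : R -> R -> R.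
Hypothesis Hinc : incidence_hyps F f.

Lemma incidence_ex_derive_S S I : ex_derive (fun s => f s I) S.
Proof. destruct Hinc as (_ & ((Hd & _) & _) & _). apply Hd. Qed.

Lemma incidence_ex_derive_I S I : ex_derive (fun i => f S i) I.
Proof. destruct Hinc as (_ & ((Hd & _) & _) & _). apply Hd. Qed.

Lemma incidence_continuous_S S I : continuous (fun s => f s I) S.
Proof. exact (ex_derive_continuous _ _ (incidence_ex_derive_S S I)). Qed.

Lemma incidence_continuous_I S I : continuous (fun i => f S i) I.
Proof. exact (ex_derive_continuous _ _ (incidence_ex_derive_I S I)). Qed.

Lemma incidence_continuity_2d S I : continuity_2d_pt f S I.
Proof. destruct Hinc as (_ & ((_ & Hc & _) & _) & _). apply Hc. Qed.

Lemma incidence_f_nonneg S I : 0 <= S -> 0 <= I -> 0 <= f S I.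
Proof. destruct Hinc as (_ & _ & Hnn & _). apply Hnn. Qed.

Lemma incidence_factor S I : 0 <= S -> 0 <= I -> F S I = I * f S I.
Proof. destruct Hinc as (_ & _ & _ & Hfac & _). apply Hfac. Qed.

Lemma incidence_f_incr_S I x y : 0 <= I -> 0 <= x -> x < y -> f x I < f y I.
Proof.
  destruct Hinc as (_ & _ & _ & _ & _ & _ & Hsign & _). intros HI Hx Hxy.
  apply (incr_function_le (fun s => f s I) (Finite 0) p_infty (fun s => dS f s I));
    simpl; try lra; intros s Hs _.
  - apply Derive_correct, incidence_ex_derive_S.
  - apply (Hsign s I Hs HI).
Qed.

Lemma incidence_f_nonincr_I S x y : 0 <= S -> 0 <= x -> x <= y -> f S y <= f S x.
Proof.
  destruct Hinc as (_ & _ & _ & _ & _ & _ & Hsign & _). intros HS.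
  apply (nonincr_of_derive_nonpos (fun i => f S i) (fun i => dI f S i)); intros i Hi.
  - apply Derive_correct, incidence_ex_derive_I.
  - apply (Hsign S i HS Hi).
Qed.

Lemma incidence_f_S0 I : 0 <= I -> f 0 I = 0.
Proof.
  destruct Hinc as (_ & _ & _ & Hfac & HF0 & _).
  assert (Hpos : forall i, 0 < i -> f 0 i = 0).
  { intros i Hi. pose proof (Hfac 0 i ltac:(lra) ltac:(lra)) as E.
    rewrite HF0 in E by lra. destruct (Rmult_integral _ _ (eq_sym E)); lra. }
  intros [HI|<-]; [now apply Hpos|].
  apply (continuous_right_limit_unique (fun i => f 0 i)); [apply incidence_continuous_I|].
  apply (filterlim_ext_loc (fun _ => 0)); [|apply filterlim_const].
  exists (mkposreal 1 Rlt_0_1). intros i _ Hi. symmetry. now apply Hpos.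
Qed.

Lemma incidence_dI_I0 S : 0 <= S -> dI F S 0 = f S 0.
Proof.
  destruct Hinc as (((HdF & _) & _) & _). intros HS.
  apply (is_derive_id_mul_at_0 (fun i => F S i) (fun i => f S i)).
  - apply Derive_correct, HdF.
  - apply incidence_continuous_I.
  - intros h Hh. now apply incidence_factor.
Qed.

End IncidenceFunction.

Section Coexistence.

Variables Lam mu r k a1 a2 : R.
Variables F1 f1 F2 f2 : R -> R -> R.
Hypotheses (Hmu : 0 < mu) (Hr : 0 < r) (Hk : 0 < k) (Ha1 : 0 < a1) (Ha2 : 0 < a2).
Hypotheses (HF1 : incidence_hyps F1 f1) (HF2 : incidence_hyps F2 f2).

(* With [a1], [a2] in place of [alpha1], [alpha2]: [V1_of] solves the V1-equation, [I2_rate] is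
   the per-capita growth rate of I2 there, and once the I1- and I2-equations hold the S-equation
   reads [Lam = a1 * I1 + outflow S I2], which [I1_of] solves for I1. *)
Definition V1_of S I2 := r * S / (mu + k * I2).
Definition I2_rate S I2 := f2 S I2 + k * V1_of S I2 - a2.
Definition outflow S I2 := (a2 - k * V1_of S I2) * I2 + (r + mu) * S.
Definition I1_of S I2 := (Lam - outflow S I2) / a1.

Lemma V1_of_pos S I2 : 0 < S -> 0 <= I2 -> 0 < V1_of S I2.
Proof. intros HS HI2. unfold V1_of. apply Rdiv_lt_0_compat; nra. Qed.

Lemma I2_rate_incr_S t x y : 0 <= t -> 0 <= x -> x < y -> I2_rate x t < I2_rate y t.
Proof.
  intros Ht Hx Hxy. unfold I2_rate, V1_of.
  pose proof (incidence_f_incr_S F2 f2 HF2 t x y Ht Hx Hxy).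
  assert (r * x / (mu + k * t) <= r * y / (mu + k * t)).
  { apply Rmult_le_compat_r; [left; apply Rinv_0_lt_compat; nra|nra]. }
  nra.
Qed.

Lemma I2_rate_nonincr_I2 S x y : 0 <= S -> 0 <= x -> x <= y -> I2_rate S y <= I2_rate S x.
Proof.
  intros HS Hx Hxy. unfold I2_rate, V1_of.
  pose proof (incidence_f_nonincr_I F2 f2 HF2 S x y HS Hx Hxy).
  assert (r * S / (mu + k * y) <= r * S / (mu + k * x)).
  { apply Rmult_le_compat_l; [nra|]. apply Rinv_le_contravar; nra. }
  nra.
Qed.

Lemma I2_rate_S0 t : 0 <= t -> I2_rate 0 t = - a2.
Proof.
  intros Ht. unfold I2_rate, V1_of. rewrite (incidence_f_S0 F2 f2 HF2) by exact Ht.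
  field. nra.
Qed.

Lemma continuous_I2_rate_S t S : continuous (fun s => I2_rate s t) S.
Proof.
  unfold I2_rate, V1_of, Rdiv.
  apply continuous_Rminus; [apply continuous_Rplus|apply continuous_const].
  - apply (incidence_continuous_S F2 f2 HF2).
  - apply continuous_Rmult; [apply continuous_const|].
    apply continuous_Rmult; [|apply continuous_const].
    apply continuous_Rmult; [apply continuous_const|apply continuous_id].
Qed.

Lemma continuous_I2_rate_I2 S t : 0 <= t -> continuous (I2_rate S) t.
Proof.
  intros Ht. unfold I2_rate, V1_of, Rdiv.
  apply continuous_Rminus; [apply continuous_Rplus|apply continuous_const].
  - apply (incidence_continuous_I F2 f2 HF2).
  - apply continuous_Rmult; [apply continuous_const|].
    apply continuous_Rmult; [apply continuous_const|].
    apply continuous_Rinv_comp; [|nra].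
    apply continuous_Rplus; [apply continuous_const|].
    apply continuous_Rmult; [apply continuous_const|apply continuous_id].
Qed.

Lemma I1_of_I2_0 S : I1_of S 0 = (Lam - (r + mu) * S) / a1.
Proof. unfold I1_of, outflow. f_equal. ring. Qed.

Lemma continuous_I1_of (u v : R -> R) t :
  continuous u t -> continuous v t -> 0 <= v t ->
  continuous (fun x => I1_of (u x) (v x)) t.
Proof.
  intros Hu Hv Hvt. unfold I1_of, outflow, V1_of, Rdiv.
  apply continuous_Rmult; [|apply continuous_const].
  apply continuous_Rminus; [apply continuous_const|].
  apply continuous_Rplus; [apply continuous_Rmult; [|exact Hv]|].
  - apply continuous_Rminus; [apply continuous_const|].
    apply continuous_Rmult; [apply continuous_const|].
    apply continuous_Rmult; [apply continuous_Rmult; [apply continuous_const|exact Hu]|].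
    apply continuous_Rinv_comp; [|nra].
    apply continuous_Rplus; [apply continuous_const|].
    apply continuous_Rmult; [apply continuous_const|exact Hv].
  - apply continuous_Rmult; [apply continuous_const|exact Hu].
Qed.

Variables St I2t : R.
Hypotheses (HSt : 0 < St) (HI2t : 0 < I2t).
Hypotheses (HE2_rate : I2_rate St I2t = 0) (HE2 : I1_of St I2t = 0).

Lemma outflow_lt S I2 :
  0 <= S <= St -> 0 <= I2 < I2t -> k * V1_of S I2 <= a2 -> outflow S I2 < outflow St I2t.
Proof.
  intros HS HI2 HV1. set (q := / (mu + k * I2t)).
  assert (Hq : 0 < q) by (apply Rinv_0_lt_compat; nra).
  assert (Hmuq : mu * q < 1).
  { assert (Hqq : (mu + k * I2t) * q = 1) by (unfold q; field; nra).
    assert (0 < k * I2t * q) by (repeat apply Rmult_lt_0_compat; lra).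
    lra. }
  assert (Hsplit : outflow St I2t - outflow S I2 =
    (St - S) * (mu + r * mu * q) + (I2t - I2) * (a2 - k * V1_of S I2 * mu * q)).
  { unfold outflow, V1_of, q. field. nra. }
  assert (0 < r * mu * q) by (repeat apply Rmult_lt_0_compat; lra).
  assert (0 <= (St - S) * (mu + r * mu * q)) by (apply Rmult_le_pos; lra).
  assert (0 < (I2t - I2) * (a2 - k * V1_of S I2 * mu * q)).
  { apply Rmult_lt_0_compat; [lra|].
    assert (k * V1_of S I2 * (mu * q) <= a2 * (mu * q)) by (apply Rmult_le_compat_r; nra).
    nra. }
  lra.
Qed.

Lemma I1_of_pos S I2 :
  0 <= S <= St -> 0 <= I2 < I2t -> I2_rate S I2 = 0 -> 0 < I1_of S I2.
Proof.
  intros HS HI2 Hrate.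
  assert (Hlam : Lam = outflow St I2t).
  { unfold I1_of, Rdiv in HE2. destruct (Rmult_integral _ _ HE2) as [|Hinv]; [lra|].
    exfalso. exact (Rinv_neq_0_compat a1 ltac:(lra) Hinv). }
  pose proof (incidence_f_nonneg F2 f2 HF2 S I2 ltac:(lra) ltac:(lra)).
  unfold I2_rate in Hrate.
  pose proof (outflow_lt S I2 HS HI2 ltac:(lra)).
  unfold I1_of. apply Rdiv_lt_0_compat; lra.
Qed.

(* [sigma] is only needed on [0, I2t]; clamping the parameter extends it continuously to all
   of R, where the continuity and intermediate value lemmas live. *)
Lemma exists_I2_nullcline :
  exists sigma : R -> R, forall t, 0 < sigma t <= St /\ I2_rate (sigma t) (clamp 0 I2t t) = 0.
Proof.
  apply (functional_choice (fun t s => 0 < s <= St /\ I2_rate s (clamp 0 I2t t) = 0)).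
  intros t.
  set (u := clamp 0 I2t t).
  assert (Hu : 0 <= u <= I2t) by (apply clamp_bounds; lra).
  assert (Hneg : I2_rate 0 u < 0) by (rewrite I2_rate_S0; lra).
  assert (Hpos : 0 <= I2_rate St u).
  { rewrite <- HE2_rate. apply I2_rate_nonincr_I2; lra. }
  destruct (IVT_gen_consistent (fun s => I2_rate s u) 0 St 0) as [S [HS Hroot]].
  - intros x. apply continuous_I2_rate_S.
  - rewrite Rmin_left, Rmax_right; lra.
  - rewrite Rmin_left, Rmax_right in HS by lra.
    exists S. split; [|exact Hroot].
    assert (S <> 0) by (intros ->; lra). lra.
Qed.

Variables Sb I1b : R.
Hypotheses (HSb : 0 < Sb) (HI1b : 0 <= I1b) (HE1_rate : f1 Sb I1b = a1) (HE1 : I1_of Sb 0 = I1b).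
Hypotheses (HR2 : 0 < I2_rate Sb 0) (HR1 : a1 < f1 St 0).

Section Nullcline.

Variable sigma : R -> R.
Hypothesis Hsigma : forall t, 0 < sigma t <= St /\ I2_rate (sigma t) (clamp 0 I2t t) = 0.

Lemma continuous_sigma t : continuous sigma t.
Proof.
  apply (continuous_increasing_root (fun s t => I2_rate s (clamp 0 I2t t))).
  - intros u x y Hx Hxy. apply I2_rate_incr_S; [apply clamp_bounds|..]; lra.
  - intros x _. apply (continuous_comp (clamp 0 I2t) (I2_rate x)); [apply continuous_clamp|].
    apply continuous_I2_rate_I2, clamp_bounds. lra.
  - intros u. split; apply Hsigma.
Qed.

Lemma sigma_0_lt_Sb : sigma 0 < Sb.
Proof.
  destruct (Hsigma 0) as [Hs Hroot]. rewrite clamp_id in Hroot by lra.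
  apply (strict_incr_reflect (fun s => I2_rate s 0)); [|lra..].
  intros; apply I2_rate_incr_S; lra.
Qed.

Lemma sigma_I2t : sigma I2t = St.
Proof.
  destruct (Hsigma I2t) as [Hs Hroot]. rewrite clamp_id in Hroot by lra.
  destruct (proj2 Hs) as [Hlt|]; [|assumption].
  pose proof (I2_rate_incr_S I2t (sigma I2t) St ltac:(lra) ltac:(lra) Hlt). lra.
Qed.

Lemma continuous_I1_rate_on_nullcline t :
  continuous (fun t => f1 (sigma t) (I1_of (sigma t) (clamp 0 I2t t)) - a1) t.
Proof.
  apply continuous_Rminus; [|apply continuous_const].
  apply continuous_comp_2d; [apply (incidence_continuity_2d F1 f1 HF1)|apply continuous_sigma|].
  apply continuous_I1_of; [apply continuous_sigma|apply continuous_clamp|].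
  apply clamp_bounds. lra.
Qed.

Lemma I1_rate_on_nullcline_0 : f1 (sigma 0) (I1_of (sigma 0) 0) < a1.
Proof.
  pose proof sigma_0_lt_Sb as Hlt. destruct (Hsigma 0) as [[Hs _] _].
  assert (HI1 : I1b <= I1_of (sigma 0) 0).
  { rewrite <- HE1, !I1_of_I2_0. unfold Rdiv.
    apply Rmult_le_compat_r; [left; apply Rinv_0_lt_compat|]; nra. }
  pose proof (incidence_f_nonincr_I F1 f1 HF1 (sigma 0) _ _ ltac:(lra) HI1b HI1).
  pose proof (incidence_f_incr_S F1 f1 HF1 I1b (sigma 0) Sb HI1b ltac:(lra) Hlt).
  lra.
Qed.

End Nullcline.

Theorem exists_coexistence_point :
  exists S I1 I2, 0 < S /\ 0 < I1 /\ 0 < I2 /\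
    I2_rate S I2 = 0 /\ f1 S I1 = a1 /\ I1 = I1_of S I2.
Proof.
  destruct exists_I2_nullcline as [sigma Hsigma].
  set (g := fun t => f1 (sigma t) (I1_of (sigma t) (clamp 0 I2t t)) - a1).
  assert (Hg0 : g 0 < 0).
  { unfold g. rewrite clamp_id by lra. pose proof (I1_rate_on_nullcline_0 sigma Hsigma). lra. }
  assert (HgI2t : 0 < g I2t).
  { unfold g. rewrite clamp_id, (sigma_I2t sigma Hsigma), HE2 by lra. lra. }
  destruct (IVT_gen_consistent g 0 I2t 0) as [z [Hz Hgz]].
  - apply (continuous_I1_rate_on_nullcline sigma Hsigma).
  - rewrite Rmin_left, Rmax_right; lra.
  - rewrite Rmin_left, Rmax_right in Hz by lra.
    assert (z <> 0) by (intros ->; lra). assert (z <> I2t) by (intros ->; lra).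
    unfold g in Hgz. rewrite clamp_id in Hgz by lra.
    destruct (Hsigma z) as [HSz Hrate]. rewrite clamp_id in Hrate by lra.
    exists (sigma z), (I1_of (sigma z) z), z.
    repeat split; try lra. apply I1_of_pos; lra.
Qed.

End Coexistence.

Section Model.

Variables (Lam mu r k gamma1 gamma2 v1 v2 : R) (F1 f1 F2 f2 : R -> R -> R).
Hypotheses (Hmu : 0 < mu) (Hr : 0 < r) (Hk : 0 < k).
Hypotheses (Hg1 : 0 < gamma1) (Hg2 : 0 < gamma2) (Hv1 : 0 <= v1) (Hv2 : 0 <= v2).
Hypotheses (HF1 : incidence_hyps F1 f1) (HF2 : incidence_hyps F2 f2).

Let alpha1 := gamma1 + v1 + mu.
Let alpha2 := gamma2 + v2 + mu.

Lemma equilibrium_without_I2 Sb V1b I1b :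
  0 < I1b -> is_equilibrium Lam mu r k gamma1 gamma2 v1 v2 F1 F2 Sb V1b I1b 0 ->
  f1 Sb I1b = alpha1 /\ V1b = V1_of mu r k Sb 0 /\
  I1_of Lam mu r k alpha1 alpha2 Sb 0 = I1b.
Proof.
  intros HI1b (HSb & _ & _ & _ & eS & eV & eI & _).
  unfold rhs_S, rhs_V1, rhs_I1 in *.
  rewrite (incidence_factor F1 f1 HF1) in eS, eI by lra.
  rewrite (incidence_factor F2 f2 HF2) in eS by lra.
  assert (Hf1 : f1 Sb I1b = alpha1).
  { apply Rmult_eq_reg_l with I1b; unfold alpha1; lra. }
  split; [exact Hf1|split].
  - unfold V1_of. field_simplify_eq; nra.
  - rewrite I1_of_I2_0. rewrite Hf1 in eS. field_simplify_eq; [lra|unfold alpha1; lra].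
Qed.

Lemma equilibrium_without_I1 St V1t I2t :
  0 < I2t -> is_equilibrium Lam mu r k gamma1 gamma2 v1 v2 F1 F2 St V1t 0 I2t ->
  V1t = V1_of mu r k St I2t /\ I2_rate mu r k alpha2 f2 St I2t = 0 /\
  I1_of Lam mu r k alpha1 alpha2 St I2t = 0.
Proof.
  intros HI2t (HSt & _ & _ & _ & eS & eV & _ & eI).
  unfold rhs_S, rhs_V1, rhs_I2 in *.
  rewrite (incidence_factor F1 f1 HF1) in eS by lra.
  rewrite (incidence_factor F2 f2 HF2) in eS, eI by lra.
  assert (HV1t : V1t = V1_of mu r k St I2t).
  { unfold V1_of. field_simplify_eq; nra. }
  assert (Hrate : I2_rate mu r k alpha2 f2 St I2t = 0).
  { unfold I2_rate. rewrite <- HV1t. apply Rmult_eq_reg_l with I2t; unfold alpha2; lra. }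
  split; [exact HV1t|split; [exact Hrate|]].
  unfold I2_rate in Hrate. unfold I1_of, outflow. rewrite <- HV1t in *.
  replace (alpha2 - k * V1t) with (f2 St I2t) by lra.
  unfold Rdiv. rewrite <- (Rmult_0_l (/ alpha1)). f_equal. lra.
Qed.

Lemma is_equilibrium_of_rates S I1 I2 :
  0 <= S -> 0 <= I1 -> 0 <= I2 ->
  I2_rate mu r k alpha2 f2 S I2 = 0 -> f1 S I1 = alpha1 ->
  I1 = I1_of Lam mu r k alpha1 alpha2 S I2 ->
  is_equilibrium Lam mu r k gamma1 gamma2 v1 v2 F1 F2 S (V1_of mu r k S I2) I1 I2.
Proof.
  intros HS HI1 HI2 Hrate Hf1 HI1eq.
  unfold I2_rate in Hrate. unfold I1_of, outflow in HI1eq.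
  unfold is_equilibrium, rhs_S, rhs_V1, rhs_I1, rhs_I2.
  rewrite (incidence_factor F1 f1 HF1), (incidence_factor F2 f2 HF2) by lra.
  fold alpha1 alpha2. rewrite Hf1.
  assert (HV1 : 0 <= V1_of mu r k S I2) by (unfold V1_of; apply Rdiv_le_0_compat; nra).
  repeat split; try lra.
  - rewrite HI1eq. field_simplify_eq; [nra|unfold alpha1; lra].
  - unfold V1_of. field. nra.
  - replace (f2 S I2) with (alpha2 - k * V1_of mu r k S I2) by lra. ring.
Qed.

Lemma invasion_by_I2 Sb :
  0 <= Sb ->
  (1 / alpha2) * dI F2 Sb 0 + k * V1_of mu r k Sb 0 / alpha2 > 1 ->
  0 < I2_rate mu r k alpha2 f2 Sb 0.
Proof.
  intros HSb HR. rewrite (incidence_dI_I0 F2 f2 HF2 Sb HSb) in HR.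
  replace (1 / alpha2 * f2 Sb 0 + k * V1_of mu r k Sb 0 / alpha2)
    with ((f2 Sb 0 + k * V1_of mu r k Sb 0) / alpha2) in HR by (field; unfold alpha2; lra).
  apply lt_of_div_gt_1 in HR; [|unfold alpha2; lra].
  unfold I2_rate. lra.
Qed.

Lemma invasion_by_I1 St : 0 <= St -> (1 / alpha1) * dI F1 St 0 > 1 -> alpha1 < f1 St 0.
Proof.
  intros HSt HR. rewrite (incidence_dI_I0 F1 f1 HF1 St HSt) in HR.
  replace (1 / alpha1 * f1 St 0) with (f1 St 0 / alpha1) in HR by (field; unfold alpha1; lra).
  apply lt_of_div_gt_1 in HR; [exact HR|unfold alpha1; lra].
Qed.

End Model.

Theorem mainTheorem10 (Lam mu r k gamma1 gamma2 v1 v2 : R)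
  (F1 f1 F2 f2 : R -> R -> R)
  (HLam : 0 < Lam) (Hmu : 0 < mu) (Hr : 0 < r) (Hk : 0 < k)
  (Hg1 : 0 < gamma1) (Hg2 : 0 < gamma2) (Hv1 : 0 <= v1) (Hv2 : 0 <= v2)
  (HF1 : incidence_hyps F1 f1) (HF2 : incidence_hyps F2 f2)
  (Sb V1b I1b St V1t I2t : R)
  (HSb : 0 < Sb) (HV1b : 0 < V1b) (HI1b : 0 < I1b)
  (HE1 : is_equilibrium Lam mu r k gamma1 gamma2 v1 v2 F1 F2 Sb V1b I1b 0)
  (HSt : 0 < St) (HV1t : 0 < V1t) (HI2t : 0 < I2t)
  (HE2 : is_equilibrium Lam mu r k gamma1 gamma2 v1 v2 F1 F2 St V1t 0 I2t)
  (HR2 : (1 / (gamma2 + v2 + mu)) * dI F2 Sb 0 + k * V1b / (gamma2 + v2 + mu) > 1)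
  (HR1 : (1 / (gamma1 + v1 + mu)) * dI F1 St 0 > 1) :
  exists S V1 I1 I2 : R,
    0 < S /\ 0 < V1 /\ 0 < I1 /\ 0 < I2 /\
    is_equilibrium Lam mu r k gamma1 gamma2 v1 v2 F1 F2 S V1 I1 I2.
Proof.
  destruct (equilibrium_without_I2 _ _ _ _ _ _ _ _ _ _ _ _ Hmu Hg1 Hv1 HF1 HF2 _ _ _ HI1b HE1)
    as (Hf1b & HV1b_eq & HI1b_eq).
  destruct (equilibrium_without_I1 _ _ _ _ _ _ _ _ _ _ _ _ Hmu Hk HF1 HF2 _ _ _ HI2t HE2)
    as (_ & Hrate_t & HI1t_eq).
  rewrite HV1b_eq in HR2.
  pose proof (invasion_by_I2 _ _ _ _ _ _ _ Hmu Hg2 Hv2 HF2 Sb ltac:(lra) HR2) as Hinv2.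
  pose proof (invasion_by_I1 _ _ _ _ _ Hmu Hg1 Hv1 HF1 St ltac:(lra) HR1) as Hinv1.
  destruct (exists_coexistence_point Lam mu r k (gamma1 + v1 + mu) (gamma2 + v2 + mu) _ _ _ _
              Hmu Hr Hk ltac:(lra) ltac:(lra) HF1 HF2 St I2t HSt HI2t Hrate_t HI1t_eq
              Sb I1b HSb ltac:(lra) Hf1b HI1b_eq Hinv2 Hinv1)
    as (S & I1 & I2 & HS & HI1 & HI2 & Hrate & Hf1 & HI1_eq).
  exists S, (V1_of mu r k S I2), I1, I2.
  split; [exact HS|split; [apply V1_of_pos; lra|split; [exact HI1|split; [exact HI2|]]]].
  apply (is_equilibrium_of_rates _ _ _ _ _ _ _ _ _ f1 _ f2); assumption || lra.
Qed.
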